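(* Let $x_0 \in \mathbb R^{n_x}$ and $u_0 \in \mathbb R^{n_u} \times \{0,1\}^{m_u}$ with $(x_0,u_0) \in \mathcal D$, let $v_0 := V u_0$, let $e_0 \in \mathbb R^{n_x}$, and let $x_1 := A x_0 + B u_0 + e_0$. Let $\mathcal V_0 = [(\underline v_{t|0})_{t=0}^{T-1}, (\bar v_{t|0})_{t=0}^{T-1}]$ be an interval with $\underline v_{0|0} \le v_0 \le \bar v_{0|0}$, and let $\mathcal V_1 := [(\underline v_{1|0}, \ldots, \underline v_{T-1|0}, 0), (\bar v_{1|0}, \ldots, \bar v_{T-1|0}, 1)]$. Let $\{\lambda_{t|0}, \rho_{t|0}\}_{t=0}^{T}$, $\{\mu_{t|0}, \underline\nu_{t|0}, \bar\nu_{t|0}, \sigma_{t|0}\}_{t=0}^{T-1}$ be a certificate of infeasibility for $\mathbf P(\mathcal V_0; x_0)$, with dual objective value $\underline\theta_0(\mathcal V_0)$ (for $\mathbf D(\mathcal V_0; x_0)$). Define the shifted multipliers $(\lambda_{t|1}, \rho_{t|1}) := (\lambda_{t+1|0}, \rho_{t+1|0})$ for $t = 0,\ldots,T-1$, $(\lambda_{T|1}, \rho_{T|1}) := 0$, $(\mu_{t|1}, \underline\nu_{t|1}, \bar\nu_{t|1}, \sigma_{t|1}) := (\mu_{t+1|0}, \underline\nu_{t+1|0}, \bar\nu_{t+1|0}, \sigma_{t+1|0})$ for $t = 0,\ldots,T-2$, and $(\mu_{T-1|1}, \underline\nu_{T-1|1}, \bar\nu_{T-1|1}, \sigma_{T-1|1})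 := 0$. Let $\pi_3 := (h - F x_0 - G u_0)'\mu_{0|0} + (v_0 - \underline v_{0|0})'\underline\nu_{0|0} + (\bar v_{0|0} - v_0)'\bar\nu_{0|0}$. Then the shifted multipliers form a certificate of infeasibility for $\mathbf P(\mathcal V_1; x_1)$ whenever $\lambda_{1|0}' e_0 < \underline\theta_0(\mathcal V_0) + \pi_3$. Moreover, this inequality always holds if $e_0 = 0$.
   Context: Fix integers $n_x, n_u, m_u \ge 0$ and $T \ge 1$. Let $A \in \mathbb R^{n_x \times n_x}$, $B \in \mathbb R^{n_x \times (n_u+m_u)}$, and let $F, G, h$ define the polyhedron $\mathcal D = \{(x,u) \in \mathbb R^{n_x} \times \mathbb R^{n_u+m_u} : F x + G u \le h\}$, assumed to contain the origin. $V \in \mathbb R^{m_u \times (n_u+m_u)}$ is the selection matrix extracting the $m_u$ binary entries of an input vector. Let $Q$ (with $n_x$ columns) and $R$ (with $n_u+m_u$ columns) be weight matrices, possibly rank deficient. An interval is a set $\mathcal V = [(\underline v_t)_{t=0}^{T-1}, (\bar v_t)_{t=0}^{T-1}] \subset \mathbb R^{T m_u}$ with $\underline v_t, \bar v_t \in \{0,1\}^{m_u}$, $\underline v_t \le \bar v_t$; in $\mathcal V_1$ above the appended blocks $0,1$ are the all-zero and all-one vectors of $\mathbb R^{m_u}$. For an interval $\mathcal V$ and $\xi \in \mathbb R^{n_x}$, the QP $\mathbf P(\mathcal V; \xi)$ is: minimize $\sum_{t=0}^T |Q x_t|^2 + \sum_{t=0}^{T-1} |R u_t|^2$ over $x_0,\ldots,x_T$,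 $u_0, \ldots, u_{T-1}$ subject to $x_0 = \xi$, $x_{t+1} = A x_t + B u_t$, $(x_t, u_t) \in \mathcal D$, $\underline v_t \le V u_t \le \bar v_t$ ($t = 0, \ldots, T-1$). Its dual $\mathbf D(\mathcal V; \xi)$ is: maximize $$-\sum_{t=0}^{T} |\rho_t/2|^2 - \sum_{t=0}^{T-1}\big(|\sigma_t/2|^2 + h'\mu_t + \bar v_t'\bar\nu_t - \underline v_t'\underline\nu_t\big) - \xi'\lambda_0$$ over $\{\lambda_t, \rho_t\}_{t=0}^T$, $\{\mu_t, \underline\nu_t, \bar\nu_t, \sigma_t\}_{t=0}^{T-1}$ subject to: $Q'\rho_t + \lambda_t - A'\lambda_{t+1} + F'\mu_t = 0$ ($t=0,\ldots,T-1$); $Q'\rho_T + \lambda_T = 0$; $R'\sigma_t - B'\lambda_{t+1} + G'\mu_t + V'(\bar\nu_t - \underline\nu_t) = 0$ ($t = 0, \ldots, T-1$); $(\mu_t, \underline\nu_t, \bar\nu_t) \ge 0$. A certificate of infeasibility for $\mathbf P(\mathcal V;\xi)$ is a feasible point of $\mathbf D(\mathcal V;\xi)$ whose dual objective value is strictly positive and for which $\rho_t = 0$ and $\sigma_t = 0$ for all $t$. *)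

(* Vectors are column vectors 'cV[R]_n over an ordered field R;
   time-indexed families are functions nat -> 'cV_n (only indices in range matter). *)
From HB Require Import structures.
From mathcomp Require Import all_boot all_order all_algebra.
Set Implicit Arguments. Unset Strict Implicit. Unset Printing Implicit Defensive.
Import Order.TTheory GRing.Theory Num.Theory.
Local Open Scope ring_scope.

Section Defs.
Variable R : realFieldType.

Definition dotv n (u v : 'cV[R]_n) : R := \sum_i u i 0 * v i 0.
Definition sqnorm n (u : 'cV[R]_n) : R := dotv u u.
Definition vle n (u v : 'cV[R]_n) : Prop := forall i, u i 0 <= v i 0.
Definition is_binary n (u : 'cV[R]_n) : Prop := forall i, u i 0 = 0 \/ u i 0 = 1.

(* selection matrix V extracting the last m_u (binary) entries of an input in R^{n_u} x {0,1}^{m_u} *)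
Definition selV (nu mu : nat) : 'M[R]_(mu, nu + mu) := row_mx 0 1%:M.

Definition is_interval (mu T : nat) (vlo vhi : nat -> 'cV[R]_mu) : Prop :=
  forall t, (t < T)%N -> [/\ is_binary (vlo t), is_binary (vhi t) & vle (vlo t) (vhi t)].

Definition dual_obj (nx mu nc nq nr T : nat) (h : 'cV[R]_nc)
    (vlo vhi : nat -> 'cV[R]_mu) (xi : 'cV[R]_nx)
    (lam : nat -> 'cV[R]_nx) (rho : nat -> 'cV[R]_nq) (muv : nat -> 'cV[R]_nc)
    (nulo nuhi : nat -> 'cV[R]_mu) (sig : nat -> 'cV[R]_nr) : R :=
  - (\sum_(t < T.+1) sqnorm ((2^-1 : R) *: rho t))
  - (\sum_(t < T) (sqnorm ((2^-1 : R) *: sig t) + dotv h (muv t)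
                   + dotv (vhi t) (nuhi t) - dotv (vlo t) (nulo t)))
  - dotv xi (lam 0%N).

Definition dual_feasible (nx nu mu nc nq nr T : nat)
    (A : 'M[R]_nx) (B : 'M[R]_(nx, nu + mu)) (F : 'M[R]_(nc, nx))
    (G : 'M[R]_(nc, nu + mu)) (Q : 'M[R]_(nq, nx)) (Rm : 'M[R]_(nr, nu + mu))
    (lam : nat -> 'cV[R]_nx) (rho : nat -> 'cV[R]_nq) (muv : nat -> 'cV[R]_nc)
    (nulo nuhi : nat -> 'cV[R]_mu) (sig : nat -> 'cV[R]_nr) : Prop :=
  [/\ (forall t, (t < T)%N ->
         Q^T *m rho t + lam t - A^T *m lam t.+1 + F^T *m muv t = 0),
      Q^T *m rho T + lam T = 0,
      (forall t, (t < T)%N ->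
         Rm^T *m sig t - B^T *m lam t.+1 + G^T *m muv t
           + (selV nu mu)^T *m (nuhi t - nulo t) = 0)
    & (forall t, (t < T)%N ->
         [/\ vle 0 (muv t), vle 0 (nulo t) & vle 0 (nuhi t)])].

Definition infeas_cert (nx nu mu nc nq nr T : nat)
    (A : 'M[R]_nx) (B : 'M[R]_(nx, nu + mu)) (F : 'M[R]_(nc, nx))
    (G : 'M[R]_(nc, nu + mu)) (h : 'cV[R]_nc) (Q : 'M[R]_(nq, nx))
    (Rm : 'M[R]_(nr, nu + mu))
    (vlo vhi : nat -> 'cV[R]_mu) (xi : 'cV[R]_nx)
    (lam : nat -> 'cV[R]_nx) (rho : nat -> 'cV[R]_nq) (muv : nat -> 'cV[R]_nc)
    (nulo nuhi : nat -> 'cV[R]_mu) (sig : nat -> 'cV[R]_nr) : Prop :=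
  [/\ dual_feasible T A B F G Q Rm lam rho muv nulo nuhi sig,
      0 < dual_obj T h vlo vhi xi lam rho muv nulo nuhi sig,
      (forall t, (t <= T)%N -> rho t = 0)
    & (forall t, (t < T)%N -> sig t = 0)].

End Defs.

(* A certificate of infeasibility has rho = sigma = 0, so the dual objective is
   linear in the multipliers, and the dual constraints are the adjoint recursion
   lambda_t = A' lambda_{t+1} - F' mu_t with lambda_T = 0.  Dropping the first stage
   and padding with zeros keeps this recursion valid on the shifted horizon.
   Pairing the stage-0 constraints with the realised transition
   x_1 = A x_0 + B u_0 + e_0 shows that the shifted objective at x_1 equals
   theta_0 + pi_3 - lambda_1' e_0, where pi_3 >= 0 pairs the stage-0 primal slacks
   with the nonnegative multipliers. *)
From HB Require Import structures.
From mathcomp Require Import all_boot all_order all_algebra.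
From mathcomp Require Import lra.
Set Implicit Arguments. Unset Strict Implicit. Unset Printing Implicit Defensive.
Import Order.TTheory GRing.Theory Num.Theory.
Local Open Scope ring_scope.

Section DotProduct.
Variable R : realFieldType.

Lemma dotvE n (u v : 'cV[R]_n) : dotv u v = (u^T *m v) 0 0.
Proof. by rewrite /dotv mxE; apply: eq_bigr => i _; rewrite mxE. Qed.

Lemma dotvC n (u v : 'cV[R]_n) : dotv u v = dotv v u.
Proof. by apply: eq_bigr => i _; rewrite mulrC. Qed.

Lemma dotvDl n (u w v : 'cV[R]_n) : dotv (u + w) v = dotv u v + dotv w v.
Proof. by rewrite /dotv -big_split; apply: eq_bigr => i _; rewrite mxE mulrDl. Qed.

Lemma dotvNl n (u v : 'cV[R]_n) : dotv (- u) v = - dotv u v.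
Proof. by rewrite /dotv -sumrN; apply: eq_bigr => i _; rewrite mxE mulNr. Qed.

Lemma dotvBl n (u w v : 'cV[R]_n) : dotv (u - w) v = dotv u v - dotv w v.
Proof. by rewrite dotvDl dotvNl. Qed.

Lemma dotvDr n (u w v : 'cV[R]_n) : dotv v (u + w) = dotv v u + dotv v w.
Proof. by rewrite !(dotvC v) dotvDl. Qed.

Lemma dotvBr n (u w v : 'cV[R]_n) : dotv v (u - w) = dotv v u - dotv v w.
Proof. by rewrite !(dotvC v) dotvBl. Qed.

Lemma dotv0r n (v : 'cV[R]_n) : dotv v 0 = 0.
Proof. by rewrite /dotv big1 // => i _; rewrite mxE mulr0. Qed.

Lemma dotv_mulmx m n (M : 'M[R]_(m, n)) x y : dotv (M *m x) y = dotv x (M^T *m y).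
Proof. by rewrite !dotvE trmx_mul mulmxA. Qed.

Lemma dotv_ge0 n (u v : 'cV[R]_n) : vle 0 u -> vle 0 v -> 0 <= dotv u v.
Proof.
move=> u_ge0 v_ge0; apply: sumr_ge0 => i _.
by apply: mulr_ge0; [move: (u_ge0 i) | move: (v_ge0 i)]; rewrite mxE.
Qed.

End DotProduct.

Definition shift (T : Type) (n : nat) (f : nat -> T) (d : T) (t : nat) : T :=
  if (t.+1 < n)%N then f t.+1 else d.

Lemma shift_vanish (M : zmodType) n (f : nat -> M) :
  (forall t, (t < n)%N -> f t = 0) -> forall t, shift n f 0 t = 0.
Proof. by move=> f0 t; rewrite /shift; case: ifP => // /f0. Qed.

Section ShiftedCertificate.
Variables (R : realFieldType) (nx nu mu nc nq nr : nat).
Variables (A : 'M[R]_nx) (B : 'M[R]_(nx, nu + mu)) (F : 'M[R]_(nc, nx)).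
Variables (G : 'M[R]_(nc, nu + mu)) (h : 'cV[R]_nc).
Variables (Q : 'M[R]_(nq, nx)) (Rm : 'M[R]_(nr, nu + mu)).
Local Notation V := (selV R nu mu).
Implicit Types (x xi : 'cV[R]_nx) (u : 'cV[R]_(nu + mu)) (lam : nat -> 'cV[R]_nx).
Implicit Types (rho : nat -> 'cV[R]_nq) (sig : nat -> 'cV[R]_nr).
Implicit Types (muv : nat -> 'cV[R]_nc) (vlo vhi nulo nuhi : nat -> 'cV[R]_mu).

Definition stage_cost (vlo vhi : nat -> 'cV[R]_mu) (muv : nat -> 'cV[R]_nc)
    (nulo nuhi : nat -> 'cV[R]_mu) (t : nat) : R :=
  dotv h (muv t) + dotv (vhi t) (nuhi t) - dotv (vlo t) (nulo t).

Definition slack_pairing (x : 'cV[R]_nx) (u : 'cV[R]_(nu + mu))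
    (lo hi : 'cV[R]_mu) (m : 'cV[R]_nc) (nlo nhi : 'cV[R]_mu) : R :=
  dotv (h - F *m x - G *m u) m + dotv (V *m u - lo) nlo + dotv (hi - V *m u) nhi.

Lemma slack_pairing_ge0 x u lo hi m nlo nhi :
  vle (F *m x + G *m u) h -> vle lo (V *m u) -> vle (V *m u) hi ->
  vle 0 m -> vle 0 nlo -> vle 0 nhi ->
  0 <= slack_pairing x u lo hi m nlo nhi.
Proof.
move=> in_D lo_le hi_ge m_ge0 nlo_ge0 nhi_ge0.
have slack_ge0 n (a b : 'cV[R]_n) : vle a b -> vle 0 (b - a).
  by move=> ab i; move: (ab i); rewrite !mxE subr_ge0.
apply: addr_ge0; first apply: addr_ge0; apply: dotv_ge0 => //; try exact: slack_ge0.
by rewrite -addrA -opprD; apply: slack_ge0.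
Qed.

Lemma dual_obj_rho_sig0 T vlo vhi xi lam rho muv nulo nuhi sig :
  (forall t, (t <= T)%N -> rho t = 0) -> (forall t, (t < T)%N -> sig t = 0) ->
  dual_obj T h vlo vhi xi lam rho muv nulo nuhi sig =
  - (\sum_(t < T) stage_cost vlo vhi muv nulo nuhi t) - dotv xi (lam 0%N).
Proof.
move=> rho0 sig0; rewrite /dual_obj big1 => [|t _]; last first.
  by rewrite rho0 ?leq_ord // scaler0 /sqnorm dotv0r.
rewrite oppr0 sub0r; congr (- _ - _); apply: eq_bigr => t _.
by rewrite sig0 // scaler0 /sqnorm dotv0r add0r.
Qed.

Lemma dual_feasible_shift T lam rho muv nulo nuhi sig :
  dual_feasible T A B F G Q Rm lam rho muv nulo nuhi sig ->
  dual_feasible T A B F G Q Rm (shift T.+1 lam 0) (shift T.+1 rho 0)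
    (shift T muv 0) (shift T nulo 0) (shift T nuhi 0) (shift T sig 0).
Proof.
case=> state_eq terminal_eq input_eq mult_ge0; split; rewrite /shift.
- move=> t ltT; rewrite !ltnS ltT; case: ltnP => [/state_eq // | leT].
  have -> : t.+1 = T by apply/eqP; rewrite eqn_leq ltT.
  by rewrite !mulmx0 subr0 addr0.
- by rewrite ltnn !mulmx0 addr0.
- move=> t ltT; rewrite ltnS; case: ltnP => [/input_eq // | leT].
  by rewrite subr0 !mulmx0 sub0r oppr0 !add0r.
- move=> t ltT; case: ifP => [/mult_ge0 // | _].
  by split=> i; rewrite lexx.
Qed.

Lemma sum_stage_cost_shift S vlo vhi muv nulo nuhi dlo dhi :
  \sum_(t < S.+1) stage_cost (shift S.+1 vlo dlo) (shift S.+1 vhi dhi)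
     (shift S.+1 muv 0) (shift S.+1 nulo 0) (shift S.+1 nuhi 0) t =
  \sum_(t < S.+1) stage_cost vlo vhi muv nulo nuhi t
    - stage_cost vlo vhi muv nulo nuhi 0%N.
Proof.
rewrite big_ord_recr [in RHS]big_ord_recl /= [RHS]addrC addKr.
rewrite {2}/stage_cost /shift ltnn !dotv0r subr0 !addr0.
by apply: eq_bigr => t _; rewrite /stage_cost /shift ltnS ltn_ord.
Qed.

Lemma dotv_successor x u e l0 l1 m nlo nhi :
  A^T *m l1 = l0 + F^T *m m -> B^T *m l1 = G^T *m m + V^T *m (nhi - nlo) ->
  dotv (A *m x + B *m u + e) l1 =
  dotv x l0 + dotv (F *m x + G *m u) m + dotv (V *m u) (nhi - nlo) + dotv e l1.
Proof.
move=> adjA adjB.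
rewrite !dotvDl !dotv_mulmx adjA adjB !dotvDr -!dotv_mulmx.
by rewrite -!addrA; congr (_ + _); rewrite !addrA addrAC.
Qed.

Lemma dual_obj_shift S x u e vlo vhi dlo dhi lam rho muv nulo nuhi sig :
  dual_feasible S.+1 A B F G Q Rm lam rho muv nulo nuhi sig ->
  (forall t, (t <= S.+1)%N -> rho t = 0) -> (forall t, (t < S.+1)%N -> sig t = 0) ->
  dual_obj S.+1 h (shift S.+1 vlo dlo) (shift S.+1 vhi dhi) (A *m x + B *m u + e)
    (shift S.+2 lam 0) (shift S.+2 rho 0) (shift S.+1 muv 0)
    (shift S.+1 nulo 0) (shift S.+1 nuhi 0) (shift S.+1 sig 0) =
  dual_obj S.+1 h vlo vhi x lam rho muv nulo nuhi sig
    + slack_pairing x u (vlo 0%N) (vhi 0%N) (muv 0%N) (nulo 0%N) (nuhi 0%N)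
    - dotv (lam 1%N) e.
Proof.
case=> state_eq _ input_eq _ rho0 sig0.
have adjA : A^T *m lam 1%N = lam 0%N + F^T *m muv 0%N.
  move/eqP: (state_eq 0%N isT); rewrite rho0 // mulmx0 add0r.
  by rewrite addrAC subr_eq0 => /eqP.
have adjB : B^T *m lam 1%N = G^T *m muv 0%N + V^T *m (nuhi 0%N - nulo 0%N).
  move/eqP: (input_eq 0%N isT); rewrite sig0 // mulmx0 sub0r -addrA addrC.
  by rewrite subr_eq0 => /eqP <-.
rewrite !dual_obj_rho_sig0 //; try by move=> t _; apply: shift_vanish.
rewrite sum_stage_cost_shift /shift /=.
rewrite (dotv_successor _ _ _ adjA adjB) /slack_pairing /stage_cost.
rewrite !dotvBl !dotvBr !dotvDl (dotvC x) (dotvC e); lra.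
Qed.

Lemma infeas_cert_shift S x u e vlo vhi dlo dhi lam rho muv nulo nuhi sig :
  infeas_cert S.+1 A B F G h Q Rm vlo vhi x lam rho muv nulo nuhi sig ->
  dotv (lam 1%N) e < dual_obj S.+1 h vlo vhi x lam rho muv nulo nuhi sig
    + slack_pairing x u (vlo 0%N) (vhi 0%N) (muv 0%N) (nulo 0%N) (nuhi 0%N) ->
  infeas_cert S.+1 A B F G h Q Rm (shift S.+1 vlo dlo) (shift S.+1 vhi dhi)
    (A *m x + B *m u + e) (shift S.+2 lam 0) (shift S.+2 rho 0) (shift S.+1 muv 0)
    (shift S.+1 nulo 0) (shift S.+1 nuhi 0) (shift S.+1 sig 0).
Proof.
case=> feas _ rho0 sig0 e_small; split; try by move=> t _; apply: shift_vanish.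
- exact: dual_feasible_shift.
- by rewrite dual_obj_shift // subr_gt0.
Qed.

End ShiftedCertificate.

Theorem corollary1 (R : realFieldType) (nx nu mu nc nq nr T : nat)
    (A : 'M[R]_nx) (B : 'M[R]_(nx, nu + mu)) (F : 'M[R]_(nc, nx))
    (G : 'M[R]_(nc, nu + mu)) (h : 'cV[R]_nc) (Q : 'M[R]_(nq, nx))
    (Rm : 'M[R]_(nr, nu + mu))
    (x0 : 'cV[R]_nx) (u0 : 'cV[R]_(nu + mu)) (e0 : 'cV[R]_nx)
    (vlo vhi : nat -> 'cV[R]_mu)
    (lam : nat -> 'cV[R]_nx) (rho : nat -> 'cV[R]_nq) (muv : nat -> 'cV[R]_nc)
    (nulo nuhi : nat -> 'cV[R]_mu) (sig : nat -> 'cV[R]_nr) :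
  (0 < T)%N ->
  vle 0 h ->                                   (* D contains the origin *)
  vle (F *m x0 + G *m u0) h ->                 (* (x0, u0) in D *)
  is_binary (selV R nu mu *m u0) ->              (* u0 in R^nu x {0,1}^mu *)
  is_interval T vlo vhi ->
  vle (vlo 0%N) (selV R nu mu *m u0) -> vle (selV R nu mu *m u0) (vhi 0%N) ->
  infeas_cert T A B F G h Q Rm vlo vhi x0 lam rho muv nulo nuhi sig ->
  let v0 := selV R nu mu *m u0 in
  let x1 := A *m x0 + B *m u0 + e0 in
  let vlo1 := fun t => if (t.+1 < T)%N then vlo t.+1 else 0 in
  let vhi1 := fun t => if (t.+1 < T)%N then vhi t.+1 else const_mx 1 in
  let lam1 := fun t => if (t < T)%N then lam t.+1 else 0 in
  let rho1 := fun t => if (t < T)%N then rho t.+1 else 0 in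
  let muv1 := fun t => if (t.+1 < T)%N then muv t.+1 else 0 in
  let nulo1 := fun t => if (t.+1 < T)%N then nulo t.+1 else 0 in
  let nuhi1 := fun t => if (t.+1 < T)%N then nuhi t.+1 else 0 in
  let sig1 := fun t => if (t.+1 < T)%N then sig t.+1 else 0 in
  let theta0 := dual_obj T h vlo vhi x0 lam rho muv nulo nuhi sig in
  let pi3 := dotv (h - F *m x0 - G *m u0) (muv 0%N)
             + dotv (v0 - vlo 0%N) (nulo 0%N) + dotv (vhi 0%N - v0) (nuhi 0%N) in
  (dotv (lam 1%N) e0 < theta0 + pi3 ->
     infeas_cert T A B F G h Q Rm vlo1 vhi1 x1 lam1 rho1 muv1 nulo1 nuhi1 sig1)
  /\ (e0 = 0 -> dotv (lam 1%N) e0 < theta0 + pi3).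
Proof.
case: T => [// | S] _ _ in_D _ _ lo_le hi_ge cert.
move=> v0 x1 vlo1 vhi1 lam1 rho1 muv1 nulo1 nuhi1 sig1 theta0 pi3.
have [[_ _ _ mult_ge0] theta0_gt0 _ _] := cert.
have [muv0_ge0 nulo0_ge0 nuhi0_ge0] := mult_ge0 0%N isT.
have pi3_ge0 : 0 <= pi3 by apply: slack_pairing_ge0.
(* [lam1] and [rho1] are [shift S.+2 _ 0] by conversion: [t < S.+1] reduces to [t.+1 < S.+2]. *)
split=> [|->]; first exact: infeas_cert_shift.
by rewrite dotv0r; apply: ltr_wpDr.
Qed.
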